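(* Assume $f_1,f_0$ are $\ell_1$-Lipschitz with constants $L_1,L_0$, and suppose the AA2 policy is applied at all times (in discrete time). If $$L_{AA2}:=\max_{0\le\Delta\le\pi\le1}\Big(2[\pi L_1+(1-\pi)L_0]+|f_1(\Delta,\pi-\Delta)-f_0(\Delta,\pi-\Delta)|\Big)<1,$$ then $|f_A(\pi,\pi')-f_B(\pi,\pi')|\le L_{AA2}|\pi-\pi'|$ for all $\pi,\pi'\in[0,1]$, and hence $|\pi_t(1|A)-\pi_t(1|B)|\to0$ for all initial profiles (society equalizes).
   Context: Two groups $A,B$; $\neg j$ is the group other than $j$. At time $t$ group $j$ has qualification profile $\pi_t(1|j)\in[0,1]$, $\pi_t(0|j)=1-\pi_t(1|j)$. Selection rates of a policy $\tau$: $\beta_t(v;j)=\tau(v;j)\pi_t(v|j)$. Dynamics: continuously differentiable $f_0,f_1:[0,1]^2\to[0,1]$, discrete time update $\pi_{t+1}(1|j)=\pi_t(1|j)f_1(\beta_t(0;j),\beta_t(1;j))+(1-\pi_t(1|j))f_0(\beta_t(0;j),\beta_t(1;j))$. ''$\ell_1$-Lipschitz with constant $L_i$'': $|f_i(x_1,x_2)-f_i(y_1,y_2)|\le L_i(|x_1-y_1|+|x_2-y_2|)$. Group $j$ is advantaged at time $t$ if $\pi_t(1|j)\ge\pi_t(1|\neg j)$. The AA2 policy with respect to advantaged $j$ is $\tau(1;j)=\tau(1;\neg j)=1$, $\tau(0;j)=0$, $\tau(0;\neg j)=(\pi_t(1|j)-\pi_t(1|\neg j))/(1-\pi_t(1|\neg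 j))$, i.e. selection rates $\beta_t(0;j)=0$, $\beta_t(1;j)=\pi_t(1|j)$, $\beta_t(0;\neg j)=\pi_t(1|j)-\pi_t(1|\neg j)$, $\beta_t(1;\neg j)=\pi_t(1|\neg j)$ (defined through these rates if a denominator vanishes). ''Applying AA2 at all times'' means at every $t$ AA2 is used with respect to the group advantaged at time $t$. With $\pi=\pi_t(1|A)$, $\pi'=\pi_t(1|B)$, the joint update is $\pi_{t+1}(1|A)=f_A(\pi,\pi')$, $\pi_{t+1}(1|B)=f_B(\pi,\pi')$. *)

From Stdlib Require Import Reals Lra.
Open Scope R_scope.

Definition in01 (x : R) : Prop := 0 <= x <= 1.

Definition continuous2 (g : R -> R -> R) : Prop :=
  forall x y eps, 0 < eps -> exists delta, 0 < delta /\
    forall x' y', Rabs (x' - x) < delta -> Rabs (y' - y) < delta ->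
      Rabs (g x' y' - g x y) < eps.

Definition C1_on_square (f : R -> R -> R) : Prop :=
  exists F D1 D2 : R -> R -> R,
    (forall x y, in01 x -> in01 y -> F x y = f x y) /\
    (forall x y, derivable_pt_lim (fun s => F s y) x (D1 x y)) /\
    (forall x y, derivable_pt_lim (fun s => F x s) y (D2 x y)) /\
    continuous2 D1 /\ continuous2 D2.

Definition maps_square_01 (f : R -> R -> R) : Prop :=
  forall x y, in01 x -> in01 y -> in01 (f x y).

Definition l1_lipschitz (f : R -> R -> R) (L : R) : Prop :=
  forall x1 x2 y1 y2, in01 x1 -> in01 x2 -> in01 y1 -> in01 y2 ->
    Rabs (f x1 x2 - f y1 y2) <= L * (Rabs (x1 - y1) + Rabs (x2 - y2)).

Definition upd (f0 f1 : R -> R -> R) (p b0 b1 : R) : R :=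
  p * f1 b0 b1 + (1 - p) * f0 b0 b1.

(* AA2 with advantaged group of profile p, disadvantaged of profile q <= p:
   advantaged rates (0, p); disadvantaged rates (p - q, q). *)
Definition upd_adv (f0 f1 : R -> R -> R) (p : R) : R := upd f0 f1 p 0 p.
Definition upd_dis (f0 f1 : R -> R -> R) (p q : R) : R := upd f0 f1 q (p - q) q.

(* joint update under AA2 w.r.t. the group advantaged at time t
   (A is taken as advantaged when pi = pi'; both choices agree then). *)
Definition fA (f0 f1 : R -> R -> R) (pi pi' : R) : R :=
  if Rle_dec pi' pi then upd_adv f0 f1 pi else upd_dis f0 f1 pi' pi.
Definition fB (f0 f1 : R -> R -> R) (pi pi' : R) : R :=
  if Rle_dec pi' pi then upd_dis f0 f1 pi pi' else upd_adv f0 f1 pi'.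

Fixpoint traj (f0 f1 : R -> R -> R) (p0 q0 : R) (t : nat) : R * R :=
  match t with
  | O => (p0, q0)
  | S t' => let '(p, q) := traj f0 f1 p0 q0 t' in (fA f0 f1 p q, fB f0 f1 p q)
  end.

Definition aa2_expr (f0 f1 : R -> R -> R) (L0 L1 D p : R) : R :=
  2 * (p * L1 + (1 - p) * L0) + Rabs (f1 D (p - D) - f0 D (p - D)).

Definition is_LAA2 (f0 f1 : R -> R -> R) (L0 L1 L : R) : Prop :=
  (forall D p, 0 <= D -> D <= p -> p <= 1 -> aa2_expr f0 f1 L0 L1 D p <= L) /\
  (exists D p, 0 <= D /\ D <= p /\ p <= 1 /\ aa2_expr f0 f1 L0 L1 D p = L).

(* Write [d = p - q >= 0] for the gap between the advantaged and the disadvantaged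
   profile. AA2 gives the advantaged group the rates [(0, p)] and the disadvantaged
   one [(d, q)], so the two rate vectors are at l1-distance [2d]. Hence
   [f_A - f_B = p (f1 0 p - f1 d q) + (1 - p) (f0 0 p - f0 d q) + d (f1 d q - f0 d q)]
   is at most [d (2 (p L1 + (1 - p) L0) + |f1 d q - f0 d q|) <= L_AA2 d].
   Iterating this contraction, the gap after [t] steps is at most [L_AA2 ^ t]. *)

From Stdlib Require Import Reals Lra.
Open Scope R_scope.

Lemma l1_lipschitz_ge0 (f : R -> R -> R) (L : R) : l1_lipschitz f L -> 0 <= L.
Proof.
  intros Hf.
  assert (H := Hf 0 0 1 0 ltac:(red; lra) ltac:(red; lra) ltac:(red; lra) ltac:(red; lra)).
  rewrite Rminus_0_l, Rminus_0_r, Rabs_Ropp, Rabs_R1, Rabs_R0 in H.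
  pose proof (Rabs_pos (f 0 0 - f 1 0)); lra.
Qed.

Lemma l1_lipschitz_AA2_rates (f : R -> R -> R) (L p q : R) :
  l1_lipschitz f L -> 0 <= q -> q <= p -> p <= 1 ->
  Rabs (f 0 p - f (p - q) q) <= L * (2 * (p - q)).
Proof.
  intros Hf Hq Hqp Hp.
  replace (2 * (p - q)) with (Rabs (0 - (p - q)) + Rabs (p - q)).
  - apply Hf; red; lra.
  - rewrite Rabs_left1, Rabs_right by lra; lra.
Qed.

Lemma upd_adv_sub_dis (f0 f1 : R -> R -> R) (p q : R) :
  upd_adv f0 f1 p - upd_dis f0 f1 p q =
  p * (f1 0 p - f1 (p - q) q) + (1 - p) * (f0 0 p - f0 (p - q) q)
  + (p - q) * (f1 (p - q) q - f0 (p - q) q).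
Proof. unfold upd_adv, upd_dis, upd; ring. Qed.

Lemma upd_adv_dis_gap (f0 f1 : R -> R -> R) (L0 L1 LAA2 p q : R) :
  l1_lipschitz f0 L0 -> l1_lipschitz f1 L1 -> is_LAA2 f0 f1 L0 L1 LAA2 ->
  0 <= q -> q <= p -> p <= 1 ->
  Rabs (upd_adv f0 f1 p - upd_dis f0 f1 p q) <= LAA2 * (p - q).
Proof.
  intros H0 H1 [Hmax _] Hq Hqp Hp.
  rewrite upd_adv_sub_dis.
  set (a := f1 0 p - f1 (p - q) q).
  set (b := f0 0 p - f0 (p - q) q).
  set (c := f1 (p - q) q - f0 (p - q) q).
  assert (Ha : Rabs a <= L1 * (2 * (p - q))) by (apply l1_lipschitz_AA2_rates; assumption).
  assert (Hb : Rabs b <= L0 * (2 * (p - q))) by (apply l1_lipschitz_AA2_rates; assumption).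
  assert (Hc : 2 * (p * L1 + (1 - p) * L0) + Rabs c <= LAA2).
  { assert (H := Hmax (p - q) p ltac:(lra) ltac:(lra) Hp).
    unfold aa2_expr in H; replace (p - (p - q)) with q in H by ring; exact H. }
  assert (Htri : Rabs (p * a + (1 - p) * b + (p - q) * c)
              <= p * Rabs a + (1 - p) * Rabs b + (p - q) * Rabs c).
  { eapply Rle_trans; [apply Rabs_triang|].
    eapply Rle_trans; [apply Rplus_le_compat_r, Rabs_triang|].
    rewrite !Rabs_mult, (Rabs_right p), (Rabs_right (1 - p)), (Rabs_right (p - q))
      by lra.
    lra. }
  assert (Hpa : p * Rabs a <= p * (L1 * (2 * (p - q)))) by (apply Rmult_le_compat_l; lra).
  assert (Hpb : (1 - p) * Rabs b <= (1 - p) * (L0 * (2 * (p - q))))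
    by (apply Rmult_le_compat_l; lra).
  assert (Hpc : (p - q) * (2 * (p * L1 + (1 - p) * L0) + Rabs c) <= (p - q) * LAA2)
    by (apply Rmult_le_compat_l; lra).
  nra.
Qed.

Lemma fA_fB_contraction (f0 f1 : R -> R -> R) (L0 L1 LAA2 : R) :
  l1_lipschitz f0 L0 -> l1_lipschitz f1 L1 -> is_LAA2 f0 f1 L0 L1 LAA2 ->
  forall pi pi', in01 pi -> in01 pi' ->
    Rabs (fA f0 f1 pi pi' - fB f0 f1 pi pi') <= LAA2 * Rabs (pi - pi').
Proof.
  intros H0 H1 HL p q [Hp0 Hp1] [Hq0 Hq1]; unfold fA, fB.
  destruct (Rle_dec q p) as [Hqp|Hpq].
  - rewrite (Rabs_right (p - q)) by lra.
    apply (upd_adv_dis_gap _ _ L0 L1); lra || assumption.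
  - rewrite Rabs_minus_sym, (Rabs_left1 (p - q)), Ropp_minus_distr by lra.
    apply (upd_adv_dis_gap _ _ L0 L1); lra || assumption.
Qed.

Lemma LAA2_ge0 (f0 f1 : R -> R -> R) (L0 L1 LAA2 : R) :
  l1_lipschitz f0 L0 -> is_LAA2 f0 f1 L0 L1 LAA2 -> 0 <= LAA2.
Proof.
  intros H0 [Hmax _].
  assert (H := Hmax 0 0 ltac:(lra) ltac:(lra) ltac:(lra)); unfold aa2_expr in H.
  pose proof (l1_lipschitz_ge0 _ _ H0).
  pose proof (Rabs_pos (f1 0 (0 - 0) - f0 0 (0 - 0))); lra.
Qed.

Lemma in01_upd (f0 f1 : R -> R -> R) (p b0 b1 : R) :
  maps_square_01 f0 -> maps_square_01 f1 -> in01 p -> in01 b0 -> in01 b1 ->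
  in01 (upd f0 f1 p b0 b1).
Proof.
  intros M0 M1 Hp Hb0 Hb1; unfold upd.
  destruct (M0 b0 b1 Hb0 Hb1), (M1 b0 b1 Hb0 Hb1); unfold in01 in *; nra.
Qed.

Lemma in01_fA_fB (f0 f1 : R -> R -> R) (p q : R) :
  maps_square_01 f0 -> maps_square_01 f1 -> in01 p -> in01 q ->
  in01 (fA f0 f1 p q) /\ in01 (fB f0 f1 p q).
Proof.
  intros M0 M1 [Hp0 Hp1] [Hq0 Hq1].
  unfold fA, fB, upd_adv, upd_dis.
  destruct (Rle_dec q p); split; apply in01_upd; auto; red; lra.
Qed.

Lemma traj_in01 (f0 f1 : R -> R -> R) (p0 q0 : R) (t : nat) :
  maps_square_01 f0 -> maps_square_01 f1 -> in01 p0 -> in01 q0 ->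
  in01 (fst (traj f0 f1 p0 q0 t)) /\ in01 (snd (traj f0 f1 p0 q0 t)).
Proof.
  intros M0 M1 Hp0 Hq0; induction t as [|t [IHp IHq]]; simpl; [auto|].
  destruct (traj f0 f1 p0 q0 t) as [p q]; apply in01_fA_fB; auto.
Qed.

Lemma Un_cv_pow_bound (u : nat -> R) (k : R) :
  0 <= k < 1 -> (forall t, 0 <= u t <= k ^ t) -> Un_cv u 0.
Proof.
  intros Hk Hu eps Heps.
  destruct (pow_lt_1_zero k ltac:(rewrite Rabs_right; lra) eps Heps) as [N HN].
  exists N; intros n Hn; unfold Rdist; rewrite Rminus_0_r.
  specialize (HN n Hn); specialize (Hu n).
  rewrite Rabs_right in HN |- *; lra.
Qed.

Theorem mainTheorem5 (f0 f1 : R -> R -> R) (L0 L1 LAA2 : R) :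
  C1_on_square f0 -> C1_on_square f1 ->
  maps_square_01 f0 -> maps_square_01 f1 ->
  l1_lipschitz f0 L0 -> l1_lipschitz f1 L1 ->
  is_LAA2 f0 f1 L0 L1 LAA2 -> LAA2 < 1 ->
  (forall pi pi', in01 pi -> in01 pi' ->
     Rabs (fA f0 f1 pi pi' - fB f0 f1 pi pi') <= LAA2 * Rabs (pi - pi')) /\
  (forall p0 q0, in01 p0 -> in01 q0 ->
     Un_cv (fun t => Rabs (fst (traj f0 f1 p0 q0 t) - snd (traj f0 f1 p0 q0 t))) 0).
Proof.
  intros _ _ M0 M1 H0 H1 HL Hlt.
  pose proof (fA_fB_contraction f0 f1 L0 L1 LAA2 H0 H1 HL) as Hcontr.
  split; [exact Hcontr|].
  intros p0 q0 Hp0 Hq0.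
  apply (Un_cv_pow_bound _ LAA2); [split; [exact (LAA2_ge0 _ _ _ _ _ H0 HL) | lra]|].
  intros t; split; [apply Rabs_pos|].
  induction t as [|t IH]; simpl.
  - destruct Hp0, Hq0; unfold Rabs; destruct Rcase_abs; lra.
  - destruct (traj_in01 f0 f1 p0 q0 t M0 M1 Hp0 Hq0) as [Hp Hq].
    destruct (traj f0 f1 p0 q0 t) as [p q]; simpl in *.
    eapply Rle_trans; [apply Hcontr; assumption|].
    apply Rmult_le_compat_l; [exact (LAA2_ge0 _ _ _ _ _ H0 HL) | exact IH].
Qed.
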